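(* Let $\gamma_+,\gamma_-\ge 0$ with $(\gamma_+,\gamma_-)\neq(0,0)$, and let $\mu\in\mathbb{R}$. Define for $x\in(0,1]$ $$f(x)=\gamma_-x+\gamma_+\ln x,\qquad g(x)=\gamma_-\ln x-\frac{\gamma_+}{x},$$ $$\Delta(x)=\gamma_++\gamma_--\frac{\gamma_+}{x}-\gamma_-x+(\gamma_--\gamma_+-\mu)\ln x,$$ and for $x\in(0,1)$, $h(x)=\dfrac{\gamma_-x+\gamma_+/x-(\gamma_++\gamma_-)}{\ln x}$. Let $(z_n)_{n\ge0}$ be a sequence with $0<z_n\le1$ for all $n$ and $z_0<1$, satisfying $$2[f(z_1)-f(z_0)]=\Delta(z_0),$$ $$(n+2)[f(z_{n+1})-f(z_n)]=n[g(z_n)-g(z_{n-1})]+\Delta(z_n)\quad\text{for all } n\ge1.$$ Then: if $h(z_0)>\gamma_--\gamma_+-\mu$, the sequence $(z_n)$ is strictly increasing; if $h(z_0)<\gamma_--\gamma_+-\mu$, it is strictly decreasing; and $(z_n)$ is constant if and only if $h(z_0)=\gamma_--\gamma_+-\mu$. In particular $(z_n)$ is either strictly increasing, strictly decreasing, or constant.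
   Context: These equations are the stationarity conditions of a Lagrange-multiplier problem, where $z_n=p_{n+1}/p_n$ are ratios of consecutive eigenvalues of a passive state with infinite Fock support, but the claim is purely about real sequences as stated. *)

From Stdlib Require Import Reals.
Open Scope R_scope.

Definition f_fun (gp gm x : R) : R := gm * x + gp * ln x.
Definition g_fun (gp gm x : R) : R := gm * ln x - gp / x.
Definition Delta_fun (gp gm mu x : R) : R :=
  gp + gm - gp / x - gm * x + (gm - gp - mu) * ln x.
Definition h_fun (gp gm x : R) : R :=
  (gm * x + gp / x - (gp + gm)) / ln x.

Definition strictly_increasing (z : nat -> R) : Prop := forall n, z n < z (S n).
Definition strictly_decreasing (z : nat -> R) : Prop := forall n, z (S n) < z n.
Definition constant_seq (z : nat -> R) : Prop := forall n, z n = z 0%nat.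

(** Writing [A := gm - gp - mu], one has [Delta x = ln x * (A - h x)] on (0,1), and [h] is
    nondecreasing there because [(x - 1) / ln x] and [(1/x - 1) / ln x] are, both by concavity
    of [ln].  Since [f] and [g] are strictly increasing, the recurrence says that the sign of
    [z (n+1) - z n] is that of [n * (g (z n) - g (z (n-1))) + Delta (z n)].  If [h (z 0) > A],
    an induction shows that [z] increases: each term stays above [z 0], where [h] is larger
    than [A], so [Delta (z n) >= 0]; the case [h (z 0) < A] is symmetric, and [h (z 0) = A]
    makes [z 0] a fixed point of the recurrence. *)

From Stdlib Require Import Reals Lra Lia Psatz.
Open Scope R_scope.

Lemma ln_le_sub_1 (x : R) : 0 < x -> ln x <= x - 1.
Proof. intros Hx. pose proof (exp_ineq1_le (ln x)) as H. rewrite exp_ln in H; lra. Qed.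

Lemma ln_lt_0 (x : R) : 0 < x -> x < 1 -> ln x < 0.
Proof. intros. rewrite <- ln_1. apply ln_increasing; lra. Qed.

Lemma ln_sub_le (x y : R) : 0 < x -> 0 < y -> ln x - ln y <= x / y - 1.
Proof.
  intros Hx Hy. unfold Rminus at 1. rewrite <- ln_Rinv, <- ln_mult by
    (try apply Rinv_0_lt_compat; lra).
  apply ln_le_sub_1. apply Rdiv_lt_0_compat; lra.
Qed.

(* Concavity of [ln] in chord form: sum the tangent bounds at [b] evaluated at [a] and [c]. *)
Lemma ln_three_chord (a b c : R) : 0 < a -> a <= b -> b <= c ->
  (c - b) * ln a + (b - a) * ln c <= (c - a) * ln b.
Proof.
  intros Ha Hab Hbc.
  pose proof (ln_sub_le a b Ha ltac:(lra)) as Hca.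
  pose proof (ln_sub_le c b ltac:(lra) ltac:(lra)) as Hcc.
  assert (Hsum : (c - b) * (a / b - 1) + (b - a) * (c / b - 1) = 0) by (field; lra).
  assert ((c - b) * (ln a - ln b) <= (c - b) * (a / b - 1))
    by (apply Rmult_le_compat_l; lra).
  assert ((b - a) * (ln c - ln b) <= (b - a) * (c / b - 1))
    by (apply Rmult_le_compat_l; lra).
  nra.
Qed.

Lemma lt_nonneg_comb (a b u u' v v' : R) : 0 <= a -> 0 <= b -> (a <> 0 \/ b <> 0) ->
  u < u' -> v < v' -> a * u + b * v < a * u' + b * v'.
Proof.
  intros Ha Hb Hab Hu Hv.
  destruct Hab; [assert (0 < a) by lra | assert (0 < b) by lra]; nra.
Qed.

Lemma f_fun_increasing (gp gm x y : R) : 0 <= gp -> 0 <= gm -> (gp <> 0 \/ gm <> 0) ->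
  0 < x -> x < y -> f_fun gp gm x < f_fun gp gm y.
Proof.
  intros. unfold f_fun. apply lt_nonneg_comb; try tauto. now apply ln_increasing.
Qed.

Lemma g_fun_increasing (gp gm x y : R) : 0 <= gp -> 0 <= gm -> (gp <> 0 \/ gm <> 0) ->
  0 < x -> x < y -> g_fun gp gm x < g_fun gp gm y.
Proof.
  intros. unfold g_fun, Rdiv.
  assert (/ y < / x) by (apply Rinv_lt_contravar; nra).
  replace (gm * ln x - gp * / x) with (gm * ln x + gp * - / x) by ring.
  replace (gm * ln y - gp * / y) with (gm * ln y + gp * - / y) by ring.
  apply lt_nonneg_comb; try tauto; [now apply ln_increasing | lra].
Qed.

Lemma Delta_fun_h_fun (gp gm mu x : R) : 0 < x -> x < 1 ->
  Delta_fun gp gm mu x = ln x * ((gm - gp - mu) - h_fun gp gm x).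
Proof.
  intros Hx Hx1. pose proof (ln_lt_0 x Hx Hx1). unfold Delta_fun, h_fun. field. split; lra.
Qed.

Lemma h_fun_nondecreasing (gp gm x y : R) : 0 <= gp -> 0 <= gm ->
  0 < x -> x <= y -> y < 1 -> h_fun gp gm x <= h_fun gp gm y.
Proof.
  intros Hp Hm Hx Hxy Hy.
  pose proof (ln_lt_0 x Hx ltac:(lra)) as Hlx. pose proof (ln_lt_0 y ltac:(lra) Hy) as Hly.
  assert (Hx1 : (1 - y) * ln x <= (1 - x) * ln y).
  { pose proof (ln_three_chord x y 1 Hx Hxy ltac:(lra)). rewrite ln_1 in *. lra. }
  assert (Hinv : (/ x - 1) * ln y <= (/ y - 1) * ln x).
  { assert (/ y <= / x) by (apply Rinv_le_contravar; lra).
    assert (1 < / y) by (rewrite <- Rinv_1; apply Rinv_lt_contravar; lra).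
    pose proof (ln_three_chord 1 (/ y) (/ x) ltac:(lra) ltac:(lra) ltac:(lra)).
    rewrite ln_1, !ln_Rinv in * by lra. lra. }
  assert (Hdiff : h_fun gp gm y - h_fun gp gm x
    = (gm * ((y - 1) * ln x - (x - 1) * ln y) + gp * ((/ y - 1) * ln x - (/ x - 1) * ln y))
      / (ln x * ln y)).
  { unfold h_fun. field. lra. }
  enough (0 <= h_fun gp gm y - h_fun gp gm x) by lra.
  rewrite Hdiff. apply Rle_mult_inv_pos; [|nra].
  apply Rplus_le_le_0_compat; apply Rmult_le_pos; lra.
Qed.

Section Recurrence.

Variables (gp gm mu : R) (z : nat -> R).
Hypotheses (Hgp : 0 <= gp) (Hgm : 0 <= gm) (Hnz : gp <> 0 \/ gm <> 0).
Hypothesis Hz : forall n, 0 < z n <= 1.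
Hypothesis Hz0 : z 0%nat < 1.
Hypothesis Hinit :
  2 * (f_fun gp gm (z 1%nat) - f_fun gp gm (z 0%nat)) = Delta_fun gp gm mu (z 0%nat).
Hypothesis Hrec : forall n : nat, (1 <= n)%nat ->
  (INR n + 2) * (f_fun gp gm (z (S n)) - f_fun gp gm (z n))
  = INR n * (g_fun gp gm (z n) - g_fun gp gm (z (pred n))) + Delta_fun gp gm mu (z n).

Let A := gm - gp - mu.
Let forcing (n : nat) : R :=
  INR n * (g_fun gp gm (z n) - g_fun gp gm (z (pred n))) + Delta_fun gp gm mu (z n).

(* Since [pred 0 = 0], the initial condition is the case [n = 0] of the recurrence. *)
Lemma recurrence (n : nat) :
  (INR n + 2) * (f_fun gp gm (z (S n)) - f_fun gp gm (z n)) = forcing n.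
Proof.
  unfold forcing. destruct n as [|n]; [|apply Hrec; lia].
  simpl pred. rewrite Rminus_diag. simpl INR. lra.
Qed.

Lemma forcing_0 : forcing 0%nat = Delta_fun gp gm mu (z 0%nat).
Proof. unfold forcing. simpl. ring. Qed.

Lemma increment_sign (n : nat) :
  (0 < forcing n -> z n < z (S n)) /\ (forcing n < 0 -> z (S n) < z n) /\
  (forcing n = 0 -> z (S n) = z n).
Proof.
  pose proof (recurrence n) as Hr. pose proof (pos_INR n).
  destruct (Hz n), (Hz (S n)).
  destruct (Rtotal_order (z n) (z (S n))) as [Hlt | [Heq | Hgt]].
  - pose proof (f_fun_increasing gp gm (z n) (z (S n)) Hgp Hgm Hnz ltac:(lra) Hlt).
    repeat split; intros; nra.
  - rewrite <- Heq in Hr. repeat split; intros; lra.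
  - pose proof (f_fun_increasing gp gm (z (S n)) (z n) Hgp Hgm Hnz ltac:(lra) Hgt).
    repeat split; intros; nra.
Qed.

Lemma Delta_fun_pos (x : R) : 0 < x < 1 -> A < h_fun gp gm x -> 0 < Delta_fun gp gm mu x.
Proof.
  intros Hx Hh. rewrite Delta_fun_h_fun by lra. pose proof (ln_lt_0 x ltac:(lra) ltac:(lra)).
  unfold A in Hh. nra.
Qed.

Lemma Delta_fun_neg (x : R) : 0 < x < 1 -> h_fun gp gm x < A -> Delta_fun gp gm mu x < 0.
Proof.
  intros Hx Hh. rewrite Delta_fun_h_fun by lra. pose proof (ln_lt_0 x ltac:(lra) ltac:(lra)).
  unfold A in Hh. nra.
Qed.

Lemma Delta_fun_nonneg (x : R) : 0 < x <= 1 -> (x < 1 -> A < h_fun gp gm x) ->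
  0 <= Delta_fun gp gm mu x.
Proof.
  intros [Hx [Hx1 | ->]] Hh.
  - left. apply Delta_fun_pos; auto.
  - unfold Delta_fun. rewrite ln_1. lra.
Qed.

Lemma increasing_of_h_gt : A < h_fun gp gm (z 0%nat) -> strictly_increasing z.
Proof.
  intros Hh.
  assert (Hup : forall n, z 0%nat <= z n < z (S n)).
  { induction n as [|n [IHlo IHstep]]; split; try lra; apply increment_sign.
    - rewrite forcing_0. apply Delta_fun_pos; [split; [apply Hz | exact Hz0] | exact Hh].
    - unfold forcing. simpl pred. rewrite S_INR. pose proof (pos_INR n).
      pose proof (g_fun_increasing gp gm _ _ Hgp Hgm Hnz (proj1 (Hz n)) IHstep).
      assert (0 <= Delta_fun gp gm mu (z (S n))).
      { apply Delta_fun_nonneg; [apply Hz|]. intros Hlt1.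
        pose proof (h_fun_nondecreasing gp gm (z 0%nat) (z (S n)) Hgp Hgm
                      (proj1 (Hz 0%nat)) ltac:(lra) Hlt1). lra. }
      nra. }
  intro n. apply Hup.
Qed.

Lemma decreasing_of_h_lt : h_fun gp gm (z 0%nat) < A -> strictly_decreasing z.
Proof.
  intros Hh.
  assert (Hdown : forall n, z n <= z 0%nat /\ z (S n) < z n).
  { induction n as [|n [IHhi IHstep]]; split; try lra; apply increment_sign.
    - rewrite forcing_0. apply Delta_fun_neg; [split; [apply Hz | exact Hz0] | exact Hh].
    - unfold forcing. simpl pred. rewrite S_INR. pose proof (pos_INR n).
      destruct (Hz (S n)) as [HzS _].
      pose proof (g_fun_increasing gp gm _ _ Hgp Hgm Hnz HzS IHstep).
      assert (Delta_fun gp gm mu (z (S n)) < 0).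
      { apply Delta_fun_neg; [lra|].
        pose proof (h_fun_nondecreasing gp gm (z (S n)) (z 0%nat) Hgp Hgm HzS ltac:(lra) Hz0).
        lra. }
      nra. }
  intro n. apply Hdown.
Qed.

Lemma constant_iff_h_eq : constant_seq z <-> h_fun gp gm (z 0%nat) = A.
Proof.
  pose proof (ln_lt_0 _ (proj1 (Hz 0%nat)) Hz0) as Hl0.
  assert (HD0 : Delta_fun gp gm mu (z 0%nat) = ln (z 0%nat) * (A - h_fun gp gm (z 0%nat)))
    by (apply Delta_fun_h_fun; [apply Hz | lra]).
  split.
  - intros Hc. rewrite (Hc 1%nat), Rminus_diag in Hinit.
    assert (Hprod : ln (z 0%nat) * (A - h_fun gp gm (z 0%nat)) = 0) by lra.
    apply Rmult_integral in Hprod. lra.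
  - intros Hh.
    assert (Hfix : forall n, z n = z 0%nat /\ z (S n) = z 0%nat).
    { induction n as [|n [IHn IHSn]]; split; auto; rewrite <- ?IHSn;
        apply increment_sign; unfold forcing; simpl pred.
      - rewrite Rminus_diag, HD0, Hh. lra.
      - rewrite IHn, IHSn, Rminus_diag, HD0, Hh. lra. }
    intro n. apply Hfix.
Qed.

End Recurrence.

Theorem lemma3 (gp gm mu : R) (z : nat -> R) :
  0 <= gp -> 0 <= gm -> (gp <> 0 \/ gm <> 0) ->
  (forall n, 0 < z n <= 1) -> z 0%nat < 1 ->
  2 * (f_fun gp gm (z 1%nat) - f_fun gp gm (z 0%nat)) = Delta_fun gp gm mu (z 0%nat) ->
  (forall n : nat, (1 <= n)%nat ->
     (INR n + 2) * (f_fun gp gm (z (S n)) - f_fun gp gm (z n))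
     = INR n * (g_fun gp gm (z n) - g_fun gp gm (z (pred n))) + Delta_fun gp gm mu (z n)) ->
  (h_fun gp gm (z 0%nat) > gm - gp - mu -> strictly_increasing z) /\
  (h_fun gp gm (z 0%nat) < gm - gp - mu -> strictly_decreasing z) /\
  (constant_seq z <-> h_fun gp gm (z 0%nat) = gm - gp - mu) /\
  (strictly_increasing z \/ strictly_decreasing z \/ constant_seq z).
Proof.
  intros Hgp Hgm Hnz Hz Hz0 Hinit Hrec.
  pose proof (increasing_of_h_gt gp gm mu z Hgp Hgm Hnz Hz Hz0 Hinit Hrec) as Hinc.
  pose proof (decreasing_of_h_lt gp gm mu z Hgp Hgm Hnz Hz Hz0 Hinit Hrec) as Hdec.
  pose proof (constant_iff_h_eq gp gm mu z Hgp Hgm Hnz Hz Hz0 Hinit Hrec) as Hcst.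
  repeat split; try tauto.
  destruct (Rtotal_order (h_fun gp gm (z 0%nat)) (gm - gp - mu)) as [H | [H | H]]; tauto.
Qed.
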